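(* Let $n\ge 2$ and $T\subset\mathbb{N}$, and suppose $\mathcal{P}_T$ is a PULB-space for dimension $n$ with quadrature rule given by nodes $\{\alpha_i\}_{i=1}^{\ell}$ and weights $\{\rho_i\}_{i=1}^{\ell}$ (as in the definition of PULB-space). Then for every potential $h$ that is absolutely monotone on $[-1,1]$, $$\max_{f\in\mathcal{L}(n,T,h)}f_0=\sum_{i=1}^{\ell}\rho_i h(\alpha_i).$$
   Context: $d\mu_n(t)=\gamma_n(1-t^2)^{(n-3)/2}dt$ is the probability measure on $[-1,1]$ with this density; $P_i^{(n)}$ is the Gegenbauer polynomial of degree $i$ (Jacobi with $\alpha=\beta=(n-3)/2$, normalized $P_i^{(n)}(1)=1$). $\mathcal{P}_T=\mathrm{span}\{P_i^{(n)}:i\in T\cup\{0\}\}$; $f_0=\int_{-1}^1 f\,d\mu_n$. A function $h:[-1,1]\to[0,+\infty]$, continuous on $[-1,1]$ and finite on $[-1,1)$, is absolutely monotone if $h^{(j)}(t)\ge0$ for all $j\ge0$ and $t\in[-1,1)$. $\mathcal{L}(n,T,h)=\{f\in\mathcal{P}_T: f(t)\le h(t)\ \forall t\in[-1,1]\}$. Nodes $\{\alpha_i\}\subset[-1,1]$ and weights $\{\rho_i\}\subset(0,1)$ form a quadrature rule exact on a linear space $\Lambda$ of polynomials if $\int_{-1}^1 f\,d\mu_n=\sum_i\rho_if(\alpha_i)$ for all $f\in\Lambda$. $\mathcal{P}_T$ is a PULB-space for dimension $n$ if (i) there is a quadrature rule with nodes in $[-1,1]$ and positive weights exact on $\mathcal{P}_T$,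 and (ii) for every absolutely monotone $h$ there exists $f\in\mathcal{L}(n,T,h)$ with $f=h$ at all nodes of that quadrature rule. *)

From HB Require Import structures.
From mathcomp Require Import all_boot all_order all_algebra.
From mathcomp Require Import all_classical all_reals all_analysis.
Set Implicit Arguments. Unset Strict Implicit. Unset Printing Implicit Defensive.
Import Order.TTheory GRing.Theory Num.Theory.
Import numFieldNormedType.Exports.
Local Open Scope classical_set_scope.
Local Open Scope ring_scope.

Section PULB.
Variable R : realType.

Definition mu_dens (n : nat) (t : R) : R := (1 - t ^+ 2) `^ ((n%:R - 3) / 2).

Definition gamma_n (n : nat) : R :=
  (\int[@lebesgue_measure R]_(t in `[-1%R, 1%R]) mu_dens n t)^-1.

Definition f0 (n : nat) (f : {poly R}) : R :=
  \int[@lebesgue_measure R]_(t in `[-1%R, 1%R]) (f.[t] * (gamma_n n * mu_dens n t)).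

(* Gegenbauer polynomials P_i^(n), normalized by P_i(1) = 1, via the
   three-term recurrence
   (i+n-2) P_{i+1} = (2i+n-2) t P_i - i P_{i-1},  P_0 = 1, P_1 = t. *)
Fixpoint gegen_pair (n i : nat) : {poly R} * {poly R} :=
  match i with
  | 0 => (1, 'X)
  | i'.+1 =>
      let pq := gegen_pair n i' in
      (pq.2, ((i' + n - 1)%:R)^-1 *:
                (((2 * i' + n)%:R) *: ('X * pq.2) - (i'.+1)%:R *: pq.1))
  end.

Definition gegen (n i : nat) : {poly R} := (gegen_pair n i).1.

Definition PT (n : nat) (T : set nat) (f : {poly R}) : Prop :=
  exists (s : seq nat) (c : nat -> R),
    (forall i, i \in s -> i = 0%N \/ T i) /\
    f = \sum_(i <- s) c i *: gegen n i.

Definition abs_monotone (h : R -> \bar R) : Prop :=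
  (forall t, -1 <= t <= 1 -> (0 <= h t)%E) /\
  {within `[-1%R, 1%R], continuous h} /\
  (forall t, -1 <= t < 1 -> h t \is a fin_num) /\
  (forall (j : nat) t, -1 < t < 1 ->
     derivable (derive1n j (fine \o h)) t 1 /\ 0 <= (derive1n j (fine \o h)) t).

Definition Lset (n : nat) (T : set nat) (h : R -> \bar R) (f : {poly R}) : Prop :=
  PT n T f /\ forall t, -1 <= t <= 1 -> ((f.[t])%:E <= h t)%E.

Definition quadrature_rule (n l : nat) (alpha rho : 'I_l -> R)
    (Lam : {poly R} -> Prop) : Prop :=
  (forall i, -1 <= alpha i <= 1) /\ (forall i, 0 < rho i < 1) /\
  forall f, Lam f -> f0 n f = \sum_(i < l) rho i * f.[alpha i].

Definition PULB_space (n : nat) (T : set nat) (l : nat) (alpha rho : 'I_l -> R) : Prop :=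
  quadrature_rule n alpha rho (PT n T) /\
  forall h, abs_monotone h ->
    exists f, Lset n T h f /\ forall i, (f.[alpha i])%:E = h (alpha i).

End PULB.

From HB Require Import structures.
From mathcomp Require Import all_boot all_order all_algebra.
From mathcomp Require Import all_classical all_reals all_analysis.
Set Implicit Arguments. Unset Strict Implicit. Unset Printing Implicit Defensive.
Import Order.TTheory GRing.Theory Num.Theory.
Import numFieldNormedType.Exports.
Local Open Scope classical_set_scope.
Local Open Scope ring_scope.

(* Integrating f against mu_n is the same as summing it over the quadrature
   rule, and the weights are positive, so f <= h at the nodes bounds f_0 by the
   quadrature sum of h, with equality when f interpolates h at the nodes; the
   PULB property supplies such an interpolant in L(n,T,h). *)

Section QuadratureBound.
Variables (R : realType) (n l : nat) (alpha rho : 'I_l -> R).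
Variable Lam : {poly R} -> Prop.
Hypothesis quad : quadrature_rule n alpha rho Lam.

Lemma quadrature_f0E (f : {poly R}) : Lam f ->
  (f0 n f)%:E = (\sum_(i < l) (rho i)%:E * (f.[alpha i])%:E)%E.
Proof.
case: quad => _ [_ exact_Lam] Lamf.
by rewrite exact_Lam // -sumEFin; apply: eq_bigr => i _; rewrite EFinM.
Qed.

Lemma quadrature_f0_le (f : {poly R}) (h : R -> \bar R) : Lam f ->
  (forall i, ((f.[alpha i])%:E <= h (alpha i))%E) ->
  ((f0 n f)%:E <= \sum_(i < l) (rho i)%:E * h (alpha i))%E.
Proof.
case: quad => _ [rho_pos _] Lamf f_le_h.
rewrite quadrature_f0E //; apply: lee_sum => i _; apply: lee_wpmul2l => //.
by rewrite lee_fin; case/andP: (rho_pos i) => /ltW.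
Qed.

Lemma quadrature_f0_eq (f : {poly R}) (h : R -> \bar R) : Lam f ->
  (forall i, (f.[alpha i])%:E = h (alpha i)) ->
  (f0 n f)%:E = (\sum_(i < l) (rho i)%:E * h (alpha i))%E.
Proof.
by move=> Lamf f_eq_h; rewrite quadrature_f0E //; apply: eq_bigr => i _; rewrite f_eq_h.
Qed.

End QuadratureBound.

Theorem theorem4p7 (R : realType) (n : nat) (T : set nat) (l : nat)
    (alpha rho : 'I_l -> R) :
  (2 <= n)%N ->
  PULB_space n T alpha rho ->
  forall h : R -> \bar R, abs_monotone h ->
    (exists f, Lset n T h f /\ (f0 n f)%:E = (\sum_(i < l) (rho i)%:E * h (alpha i))%E) /\
    (forall f, Lset n T h f -> ((f0 n f)%:E <= \sum_(i < l) (rho i)%:E * h (alpha i))%E).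
Proof.
move=> _ [quad interpolant] h hAM; split.
- have [f [Lf f_eq_h]] := interpolant h hAM.
  by exists f; rewrite (quadrature_f0_eq quad Lf.1 f_eq_h).
- move=> f [PTf f_le_h]; apply: (quadrature_f0_le (h := h) quad PTf) => i.
  have [nodes_in _] := quad.
  exact: f_le_h.
Qed.
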